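(* Let $n\geq 2$ and let $\mathbf{TP}(\alpha_2,\dots,\alpha_n)$ and $\mathbf{TP}'(\alpha_2',\dots,\alpha_n')$ be isomorphic transposed Poisson algebras. Then there exists an automorphism $\varphi$ of the associative algebra $\mu_0^n$, with parameters $A_1,\dots,A_n\in\mathbb{C}$, $A_1\neq 0$, such that for every $2\leq t\leq n$: \[ \sum_{i=2}^{t}\sum_{k_1+\cdots+k_i=t}A_{k_1}\cdots A_{k_i}\,\alpha_i'=\sum_{j=2}^{t}\sum_{i=1}^{t-j+1}\sum_{k_1+k_2=t-i-j+3}(t-2i-j+3)\,A_iA_{k_1}A_{k_2}\,\alpha_j, \] where the inner sums run over positive integers $k_1,k_2,\dots$.
   Context: $\mu_0^n$ is the complex commutative associative algebra with basis $\{e_1,\dots,e_n\}$ and $e_i\cdot e_j=e_{i+j}$ for $2\leq i+j\leq n$, other products zero. Every automorphism $\varphi$ of $\mu_0^n$ has the form $\varphi(e_1)=\sum_{i=1}^nA_ie_i$ and $\varphi(e_i)=\sum_{j=i}^n\sum_{k_1+\cdots+k_i=j}A_{k_1}\cdots A_{k_i}e_j$ for $2\leq i\leq n$, with $A_1\neq0$; $A_1,\dots,A_n$ are called its parameters. For $\alpha_2,\dots,\alpha_n\in\mathbb{C}$, $\mathbf{TP}(\alpha_2,\dots,\alpha_n)$ denotes $\mu_0^n$ with its associative product together with the bracket $[e_i,e_j]=(j-i)\sum_{t=i+j-1}^{n}\alpha_{t-i-j+3}e_t$ for $3\leq i+j\leq n+1$, other brackets of basis elements zero; it is a transposed Poisson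 algebra (commutative associative product, Lie bracket, and $2z\cdot[x,y]=[z\cdot x,y]+[x,z\cdot y]$). Isomorphisms preserve both operations. *)

From HB Require Import structures.
From mathcomp Require Import all_boot all_order all_algebra.
From mathcomp Require Import reals Rstruct complex.
Set Implicit Arguments. Unset Strict Implicit. Unset Printing Implicit Defensive.
Import Order.TTheory GRing.Theory Num.Theory.
Local Open Scope ring_scope.

Notation CC := (complex Rdefinitions.R).

(* mu_0^n is modelled on the row space 'rV[CC]_n; coordinate j : 'I_n of a
   vector is its coefficient on the basis vector e_{j+1}. *)
Definition V (n : nat) := 'rV[CC]_n.

(* basis vector e_k (k : nat); e_k = 0 unless 1 <= k <= n *)
Definition e (n k : nat) : V n := \row_(j < n) (j.+1 == k)%:R.

Definition mulA (n : nat) (x y : V n) : V n :=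
  \sum_(i < n) \sum_(j < n) (x 0 i * y 0 j) *: e n (i.+1 + j.+1)%N.

Definition brE (n : nat) (alpha : nat -> CC) (i j : nat) : V n :=
  if ((3 <= i + j) && (i + j <= n.+1))%N then
    ((j%:R - i%:R) : CC) *:
      \sum_(t < n.+1 | (i + j - 1 <= t)%N) alpha (t + 3 - (i + j))%N *: e n t
  else 0.

Definition brTP (n : nat) (alpha : nat -> CC) (x y : V n) : V n :=
  \sum_(i < n) \sum_(j < n) (x 0 i * y 0 j) *: brE n alpha i.+1 j.+1.

Definition is_linear_map (n : nat) (f : V n -> V n) : Prop :=
  forall (a : CC) (x y : V n), f (a *: x + y) = a *: f x + f y.

Definition is_mu_automorphism (n : nat) (f : V n -> V n) : Prop :=
  [/\ is_linear_map f, bijective f &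
      forall x y : V n, f (mulA x y) = mulA (f x) (f y)].

Definition is_TP_isomorphism (n : nat) (alpha alpha' : nat -> CC)
    (f : V n -> V n) : Prop :=
  [/\ is_linear_map f, bijective f,
      forall x y : V n, f (mulA x y) = mulA (f x) (f y) &
      forall x y : V n, f (brTP alpha x y) = brTP alpha' (f x) (f y)].

Definition TP_isomorphic (n : nat) (alpha alpha' : nat -> CC) : Prop :=
  exists f : V n -> V n, is_TP_isomorphism alpha alpha' f.

Definition compSum (A : nat -> CC) (i t : nat) : CC :=
  \sum_(k : {ffun 'I_i -> 'I_t.+1} |
          [forall m, (0 < (k m : nat))%N] && ((\sum_(m < i) (k m : nat))%N == t))
     \prod_(m < i) A (k m).

From Pilot Require Import Defs.
From HB Require Import structures.
From mathcomp Require Import all_boot all_order all_algebra.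
From mathcomp Require Import reals Rstruct complex.
From mathcomp Require Import ring zify.
Import GRing.Theory.
Local Open Scope ring_scope.

(** Encode [x = sum_k x_k e_k] as the polynomial [sum_k x_k X^k]; then mu_0^n
    is [X C[X]] modulo [X^(n+1)].  An automorphism [phi] of mu_0^n is the
    substitution [X |-> Q := phi(e_1)], so [phi(e_i)] is [Q^i] truncated and
    [compSum A i t] is the coefficient of [X^t] in [Q^i], where [A k = Q_k].
    The inverse [phi] of an isomorphism [TP(alpha) -> TP(alpha')] sends
    [[e_1,e_2]' = sum_(s>=2) alpha'_s e_s] to [[phi e_1, phi e_2]].  The
    coefficient of [X^t] on the left is [sum_s alpha'_s (Q^s)_t]; on the right,
    expanding bilinearly with [[e_a,e_b]] contributing [(b-a) alpha_(t+3-a-b)]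
    to [e_t], and substituting [j = t+3-a-b], gives the stated sum.  Finally
    [A_1 <> 0] because the [X]-coefficient of [phi x] is [x_1 A_1] and [phi] is
    onto. *)

Lemma can2_morph2 (T U : Type) (f : T -> U) (g : U -> T)
    (op : T -> T -> T) (op' : U -> U -> U) :
  cancel f g -> cancel g f -> {morph f : x y / op x y >-> op' x y} ->
  {morph g : x y / op' x y >-> op x y}.
Proof. by move=> fK gK fM x y; apply: (can_inj fK); rewrite gK fM !gK. Qed.

Lemma inv_TP_isomorphism n (al al' : nat -> CC) (f : V n -> V n) :
  is_TP_isomorphism al al' f -> exists g : V n -> V n, is_TP_isomorphism al' al g.
Proof.
case=> lin_f [g fK gK] mul_f br_f; exists g; split.
- by move=> a x y; apply: (can_inj fK); rewrite gK (lin_f a) !gK.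
- by exists f.
- exact: can2_morph2 mul_f.
- exact: can2_morph2 br_f.
Qed.

Section LinearMaps.
Variables (n : nat) (f : V n -> V n).
Hypothesis lin_f : is_linear_map f.

Lemma lin_map0 : f 0 = 0.
Proof.
have := lin_f 1 0 0; rewrite !scale1r addr0 => f0D.
by apply: (addrI (f 0)); rewrite addr0 -f0D.
Qed.

Lemma lin_mapZ a x : f (a *: x) = a *: f x.
Proof. by rewrite -[a *: x]addr0 (lin_f a) lin_map0 addr0. Qed.

Lemma lin_map_sum (I : Type) (r : seq I) (P : pred I) (F : I -> V n) :
  f (\sum_(i <- r | P i) F i) = \sum_(i <- r | P i) f (F i).
Proof.
apply: (big_morph _ _ lin_map0) => x y.
by rewrite -{1}[x]scale1r (lin_f 1) scale1r.
Qed.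

End LinearMaps.

Definition mupoly n (x : V n) : {poly CC} := rVpoly x * 'X.
Arguments mupoly {n}.

Fact mupoly_is_linear n : linear (@mupoly n).
Proof. by move=> a x y; rewrite /mupoly linearP mulrDl scalerAl. Qed.
HB.instance Definition _ n :=
  GRing.isLinear.Build CC (V n) {poly CC} *:%R (@mupoly n) (mupoly_is_linear n).

Section PolynomialModel.
Context {n : nat}.
Implicit Types x y : V n.

Lemma coef_mupoly0 x : (mupoly x)`_0 = 0.
Proof. by rewrite coefMX. Qed.

Lemma coef_mupolyS x (j : 'I_n) : (mupoly x)`_j.+1 = x 0 j.
Proof. by rewrite coefMX coef_rVpoly_ord. Qed.

Lemma mupoly_coefI x y :
  (forall t, (t <= n)%N -> (mupoly x)`_t = (mupoly y)`_t) -> x = y.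
Proof. by move=> eq_xy; apply/rowP => j; rewrite -!coef_mupolyS eq_xy. Qed.

Lemma e_out m : (n < m)%N -> e n m = 0.
Proof.
by move=> lt_nm; apply/rowP => j; rewrite !mxE ltn_eqF // (leq_ltn_trans _ lt_nm).
Qed.

Lemma mupoly_e m : (0 < m <= n)%N -> mupoly (e n m) = 'X^m.
Proof.
case: m => // m /andP[_ lt_mn].
have -> : e n m.+1 = delta_mx 0 (Ordinal lt_mn).
  by apply/rowP => j; rewrite !mxE eqSS.
by rewrite /mupoly rVpoly_delta -exprSr.
Qed.

Lemma coef_mupoly_e m t : (0 < m)%N -> (t <= n)%N -> (mupoly (e n m))`_t = 'X^m`_t.
Proof.
move=> m_gt0 le_tn; have [le_mn | lt_nm] := leqP m n; first by rewrite mupoly_e ?m_gt0.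
by rewrite e_out // linear0 coef0 coefXn ltn_eqF // (leq_ltn_trans le_tn lt_nm).
Qed.

Lemma row_sum_e x : x = \sum_(i < n) x 0 i *: e n i.+1.
Proof.
apply/rowP => k; rewrite summxE (bigD1 k) //= !mxE eqxx mulr1 big1 ?addr0 //.
move=> i neq_ik; rewrite !mxE eqSS.
by case: eqP => [/val_inj eq_ik | _]; [rewrite eq_ik eqxx in neq_ik | rewrite mulr0].
Qed.

Lemma mupolyE x : mupoly x = \sum_(i < n) x 0 i *: 'X^(i.+1).
Proof.
rewrite {1}[x]row_sum_e linear_sum; apply: eq_bigr => i _.
by rewrite linearZ /= mupoly_e ?ltn_ord.
Qed.

Lemma coef_mupoly_mulA x y t : (t <= n)%N ->
  (mupoly (Defs.mulA x y))`_t = (mupoly x * mupoly y)`_t.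
Proof.
move=> le_tn; rewrite (mupolyE x) (mupolyE y) mulr_suml /Defs.mulA.
rewrite linear_sum !coef_sum; apply: eq_bigr => i _.
rewrite mulr_sumr linear_sum !coef_sum; apply: eq_bigr => j _.
by rewrite -scalerAl -scalerAr linearZ /= !coefZ coef_mupoly_e // exprD mulrA.
Qed.

Lemma mulA_e1 i : (0 < i < n)%N -> Defs.mulA (e n 1) (e n i) = e n i.+1.
Proof.
move=> i_range; apply: mupoly_coefI => t le_tn.
by rewrite coef_mupoly_mulA // !mupoly_e -?exprS //; lia.
Qed.

End PolynomialModel.

Lemma coef_expr_eq0 (R : nzRingType) (Q : {poly R}) s t :
  Q`_0 = 0 -> (t < s)%N -> (Q ^+ s)`_t = 0.
Proof.
move=> Q0; elim: s t => [//|s IHs] t lt_ts.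
rewrite exprS coefM big1 // => -[[|k] lt_kt] _ /=; first by rewrite Q0 mul0r.
by rewrite IHs ?mulr0 //; lia.
Qed.

Lemma compSum_coef_pow (Q : {poly CC}) i t :
  Q`_0 = 0 -> compSum (fun k => Q`_k) i t = (Q ^+ i)`_t.
Proof.
(* Truncating [Q] at degree [t] turns [Q ^+ i] into a product of finite sums,
   which [bigA_distr_bigA] expands over the compositions [k]. *)
move=> Q0; set P := \poly_(k < t.+1) Q`_k.
have -> : (Q ^+ i)`_t = (P ^+ i)`_t.
  apply/eqP; rewrite -subr_eq0 -coefB subrXX coefM big1 // => -[k lt_kt] _ /=.
  by rewrite coefB coef_poly lt_kt subrr mul0r.
rewrite -[i in P ^+ i]card_ord -prodr_const /P poly_def bigA_distr_bigA.
rewrite coef_sum /compSum big_mkcond /=.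
apply: eq_bigr => k _.
under [in RHS]eq_bigr => m _ do rewrite -mul_polyC.
rewrite big_split /= -rmorph_prod prodrXr coefCM coefXn.
case: (boolP [forall m, (0 < (k m : nat))%N]) => /= [_ | /forallPn[m]].
  by rewrite eq_sym; case: eqP => _; rewrite ?mulr1 ?mulr0.
by rewrite lt0n negbK => /eqP km0; rewrite (bigD1 m) //= km0 Q0 !mul0r.
Qed.

Section MuEndomorphism.
Variables (n : nat) (g : V n -> V n).
Hypotheses (lin_g : is_linear_map g) (mul_g : {morph g : x y / Defs.mulA x y}).
Let Q := mupoly (g (e n 1)).

Lemma coef_mupoly_endo_e i t : (0 < i <= n)%N -> (t <= n)%N ->
  (mupoly (g (e n i)))`_t = (Q ^+ i)`_t.
Proof.
elim: i t => [|[|i] IHi] t /andP[i_gt0 lt_in] le_tn //.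
rewrite -(@mulA_e1 n i.+1) // mul_g coef_mupoly_mulA // exprS !coefM.
apply: eq_bigr => -[k lt_kt] _ /=.
by rewrite IHi ?(ltnW lt_in) ?(leq_trans (leq_subr k t) le_tn).
Qed.

Lemma coef_mupoly_endo_sum (c : nat -> CC) m t : (0 < m)%N -> (t <= n)%N ->
  (mupoly (g (\sum_(m <= s < n.+1) c s *: e n s)))`_t =
  \sum_(m <= s < t.+1) c s * (Q ^+ s)`_t.
Proof.
move=> m_gt0 le_tn; rewrite lin_map_sum // linear_sum coef_sum.
rewrite [RHS](@big_nat_widen _ _ _ _ t.+1 n.+1 _ _ le_tn) [RHS]big_mkcond /=.
apply: eq_big_nat => s /andP[le_ms lt_sn].
rewrite lin_mapZ // linearZ /= coefZ coef_mupoly_endo_e ?(leq_trans m_gt0 le_ms) //.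
by case: ltnP => // lt_ts; rewrite coef_expr_eq0 ?mulr0 ?coef_mupoly0.
Qed.

Lemma coef1_mupoly_endo x : (0 < n)%N -> (mupoly (g x))`_1 = (mupoly x)`_1 * Q`_1.
Proof.
move=> n_gt0; rewrite {1}[x]row_sum_e lin_map_sum // linear_sum coef_sum.
rewrite (bigD1 (Ordinal n_gt0)) //= big1 ?addr0 => [|i neq_i0].
  by rewrite lin_mapZ // linearZ /= coefZ (coef_mupolyS x (Ordinal n_gt0)).
rewrite lin_mapZ // linearZ /= coefZ coef_mupoly_endo_e ?ltn_ord //.
rewrite coef_expr_eq0 ?mulr0 ?coef_mupoly0 // ltnS lt0n.
by apply: contra_neq neq_i0 => i0; apply: val_inj.
Qed.

Lemma mupoly_endo_coef1_neq0 : (0 < n)%N -> bijective g -> Q`_1 != 0.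
Proof.
move=> n_gt0 [h gK hK]; apply: contra_neq (@oner_neq0 CC) => Q1_0.
have := coef1_mupoly_endo (h (e n 1)) n_gt0.
by rewrite hK Q1_0 mulr0 coef_mupoly_e // coefXn.
Qed.

End MuEndomorphism.

Definition bracket_coef (al : nat -> CC) (t a b : nat) : CC :=
  if (a + b <= t.+1)%N then (b%:R - a%:R) * al (t + 3 - (a + b))%N else 0.

Section Brackets.
Variables (n : nat) (al : nat -> CC).

Lemma coef_mupoly_brE a b t : (0 < a)%N -> (0 < b)%N -> (0 < t <= n)%N ->
  (mupoly (brE n al a b))`_t = bracket_coef al t a b.
Proof.
move=> a_gt0 b_gt0 /andP[t_gt0 le_tn]; rewrite /brE.
case: ifP => [/andP[ge3_ab le_abn] | /negbT out_ab]; rewrite /bracket_coef; last first.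
  rewrite (linear0 (@mupoly n)) coef0; case: ifP => // le_abt.
  have [-> ->] : a = 1%N /\ b = 1%N.
    by move: out_ab; rewrite negb_and -leqNgt -ltnNge => /orP[]; lia.
  by rewrite subrr mul0r.
rewrite linearZ linear_sum /= coefZ coef_sum big_mkcond /=.
have lt_tn1 : (t < n.+1)%N by [].
rewrite (bigD1 (Ordinal lt_tn1)) //= big1 ?addr0 => [|s neq_st]; last first.
  case: ifP => // le_s; rewrite linearZ /= coefZ coef_mupoly_e ?coefXn //; last lia.
  by move: neq_st; rewrite -val_eqE eq_sym => /negbTE ->; rewrite mulr0.
rewrite linearZ /= coefZ coef_mupoly_e ?coefXn ?eqxx ?mulr1 //.
by rewrite leq_subLR add1n; case: ifP; rewrite ?mulr0.
Qed.

Lemma coef_mupoly_brTP (x y : V n) t : (0 < t <= n)%N ->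
  (mupoly (brTP al x y))`_t = \sum_(1 <= a < n.+1) \sum_(1 <= b < n.+1)
     (mupoly x)`_a * (mupoly y)`_b * bracket_coef al t a b.
Proof.
move=> t_range; rewrite /brTP linear_sum coef_sum big_add1 big_mkord /=.
apply: eq_bigr => a _; rewrite linear_sum coef_sum big_add1 big_mkord /=.
by apply: eq_bigr => b _; rewrite linearZ /= coefZ coef_mupoly_brE // !coef_mupolyS.
Qed.

Lemma brTP_e a b (lt_an : (a < n)%N) (lt_bn : (b < n)%N) :
  brTP al (e n a.+1) (e n b.+1) = brE n al a.+1 b.+1.
Proof.
have pick k (lt_kn : (k < n)%N) (F : 'I_n -> V n) :
    \sum_(i < n) (e n k.+1) 0 i *: F i = F (Ordinal lt_kn).
  rewrite (bigD1 (Ordinal lt_kn)) //= big1 ?addr0 => [|i neq_ik]; rewrite mxE eqSS.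
    by rewrite eqxx scale1r.
  by move: neq_ik; rewrite -val_eqE => /negbTE ->; rewrite scale0r.
transitivity (\sum_(i < n) (e n a.+1) 0 i *:
                \sum_(j < n) (e n b.+1) 0 j *: brE n al i.+1 j.+1).
  apply: eq_bigr => i _; rewrite scaler_sumr; apply: eq_bigr => j _.
  by rewrite scalerA.
by rewrite (pick a lt_an) (pick b lt_bn).
Qed.

Lemma brE_12 : (1 < n)%N -> brE n al 1 2 = \sum_(2 <= s < n.+1) al s *: e n s.
Proof.
move=> lt_1n; rewrite /brE ifT // -natrB // subSnn scale1r big_geq_mkord.
by apply: eq_bigr => s _; rewrite addnK.
Qed.

End Brackets.

Lemma big_nat_widen_cond (R : nmodType) m p q (F : nat -> R) : (q <= p)%N ->
  \sum_(m <= k < q) F k = \sum_(m <= k < p) (if (k < q)%N then F k else 0).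
Proof. by move=> le_qp; rewrite (big_nat_widen _ _ _ _ _ le_qp) big_mkcond. Qed.

Lemma exchange_big_nat_triangle (R : nmodType) (F : nat -> nat -> R) t :
  \sum_(1 <= i < t.+1) \sum_(2 <= j < (t - i + 1).+1) F i j =
  \sum_(2 <= j < t.+1) \sum_(1 <= i < (t - j + 1).+1) F i j.
Proof.
pose G i j := if (i + j <= t.+1)%N then F i j else 0.
transitivity (\sum_(1 <= i < t.+1) \sum_(2 <= j < t.+1) G i j).
  apply: eq_big_nat => i /andP[i_gt0 le_it].
  rewrite (big_nat_widen_cond _ _ t.+1); last lia.
  by apply: eq_big_nat => j _; rewrite /G; congr (if _ then _ else _); lia.
rewrite exchange_big_nat; apply: eq_big_nat => j /andP[j_ge2 le_jt].
rewrite (big_nat_widen_cond _ _ t.+1); last lia.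
by apply: eq_big_nat => i _; rewrite /G; congr (if _ then _ else _); lia.
Qed.

Lemma sum_bracket_coef al (P R : nat -> CC) n t : (t <= n)%N -> R 1%N = 0 ->
  \sum_(1 <= a < n.+1) \sum_(1 <= b < n.+1) P a * R b * bracket_coef al t a b =
  \sum_(1 <= i < t.+1) \sum_(2 <= j < (t - i + 1).+1)
     ((t + 3)%:R - (2 * i + j)%:R) * P i * R (t + 3 - (i + j))%N * al j.
Proof.
move=> le_tn R1.
rewrite (@big_cat_nat _ _ _ t.+1) //= [X in _ + X]big_nat_cond.
rewrite [X in _ + X]big1 ?addr0 => [|a /andP[/andP[lt_ta _] _]]; last first.
  rewrite big_nat_cond big1 // => b /andP[/andP[b_gt0 _] _].
  by rewrite /bracket_coef ifN ?mulr0 //; lia.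
apply: eq_big_nat => a /andP[a_gt0 le_at].
rewrite big_ltn; last lia.
rewrite R1 mulr0 mul0r add0r [RHS]big_nat_rev /=.
rewrite [RHS](big_nat_widen_cond _ _ n.+1); last lia.
apply: eq_big_nat => b /andP[b_ge2 _]; rewrite /bracket_coef.
case: ltnP => [lt_b | le_b]; last by rewrite ifN ?mulr0 //; lia.
rewrite ifT; last lia.
have -> : (2 + (t - a + 1).+1 - b.+1 = t + 3 - (a + b))%N by lia.
have -> : (t + 3 - (a + (t + 3 - (a + b))) = b)%N by lia.
have -> : ((t + 3)%:R - (2 * a + (t + 3 - (a + b)))%:R = b%:R - a%:R :> CC).
  have -> : (2 * a + (t + 3 - (a + b)) = a + (t + 3 - b))%N by lia.
  by rewrite !natrD natrB ?natrD; [ring | lia].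
ring.
Qed.

Theorem mainTheorem6 (n : nat) (alpha alpha' : nat -> CC) :
  (2 <= n)%N ->
  TP_isomorphic n alpha alpha' ->
  exists (phi : V n -> V n) (A : nat -> CC),
    [/\ is_mu_automorphism phi,
        A 1%N != 0,
        phi (e n 1) = \sum_(i < n) A i.+1 *: e n i.+1 &
        forall t : nat, (2 <= t <= n)%N ->
          \sum_(2 <= i < t.+1) compSum A i t * alpha' i =
          \sum_(2 <= j < t.+1) \sum_(1 <= i < (t - j + 1).+1)
             ((t + 3)%:R - (2 * i + j)%:R) * A i * compSum A 2 (t + 3 - (i + j))
               * alpha j].
Proof.
move=> le_2n [f /inv_TP_isomorphism[g [lin_g bij_g mul_g br_g]]].
have n_gt0 := ltnW le_2n.
set Q := mupoly (g (e n 1)).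
have Q0 : Q`_0 = 0 := coef_mupoly0 _.
exists g, (fun k => Q`_k); split => //.
- exact: mupoly_endo_coef1_neq0 n_gt0 bij_g.
- by rewrite {1}[g _]row_sum_e; apply: eq_bigr => i _; rewrite coef_mupolyS.
move=> t /andP[le_2t le_tn].
have e2 b : (b <= n)%N -> (mupoly (g (e n 2)))`_b = (Q ^+ 2)`_b.
  exact: coef_mupoly_endo_e.
have := congr1 (fun x => (mupoly x)`_t) (br_g (e n 1) (e n 2)).
rewrite /= brTP_e ?n_gt0 // brE_12 // coef_mupoly_endo_sum // -/Q.
rewrite coef_mupoly_brTP ?(ltnW le_2t) // sum_bracket_coef //; last first.
  by rewrite e2 ?coef_expr_eq0 ?n_gt0.
under eq_big_nat => i _ do rewrite compSum_coef_pow // mulrC.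
move=> ->; rewrite -exchange_big_nat_triangle.
apply: eq_big_nat => i /andP[i_gt0 _]; apply: eq_big_nat => j /andP[j_ge2 _].
by rewrite compSum_coef_pow // e2 //; lia.
Qed.
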